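(* Let $N_c\ge 1$. Let $\mathcal{D}_{xx}\in\mathbb{R}^{N_c\times N_c}$ be a block diagonal matrix whose diagonal blocks are $\mathcal{D}^{(n_k)}(a_k,b_k)$, $k=1,\dots,S$ (with $\sum_k n_k=N_c$), and let $\mathcal{D}_{yy}\in\mathbb{R}^{N_c\times N_c}$ be a block diagonal matrix whose diagonal blocks are $\mathcal{D}^{(m_l)}(c_l,d_l)$, $l=1,\dots,T$ (with $\sum_l m_l=N_c$). Let $P\in\mathbb{R}^{N_c\times N_c}$ be a permutation matrix. Assume that every block, in both $\mathcal{D}_{xx}$ and $\mathcal{D}_{yy}$, with parameters $(n,a,b)$ satisfies one of: (1) $n=1$ and $a>0$; (2) $n=2$, $a>0$ and $ab>1$; (3) $n\ge 3$, $a>\frac{n-2}{n-1}$, $b>\frac{n-2}{n-1}$ and $a>\frac{(n-2)b-(n-3)}{(n-1)b-(n-2)}$. Then the matrix $-\mathcal{L}:=\mathcal{D}_{xx}+P^T\mathcal{D}_{yy}P$ is symmetric positive definite.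
   Context: $\mathcal{D}^{(n)}(a,b)\in\mathbb{R}^{n\times n}$ is defined by: $\mathcal{D}^{(1)}(a,b)=(a)$; $\mathcal{D}^{(2)}(a,b)=\begin{pmatrix} a & -1\\ -1 & b\end{pmatrix}$; and for $n\ge 3$, the tridiagonal matrix with all sub- and super-diagonal entries equal to $-1$, diagonal entries $(a,2,\dots,2,b)$ (first entry $a$, last entry $b$, others $2$), and all other entries zero. In the application, $N_c$ is the number of computational grid points of a 2D embedded boundary discretization, $\mathcal{D}_{xx}$ is the (scaled) discretization of $-\partial_{xx}$ along all horizontal grid-line segments in lexicographic (fast-in-$x$) ordering, $\mathcal{D}_{yy}$ is the discretization of $-\partial_{yy}$ along all vertical segments in fast-in-$y$ ordering, and $P$ is the permutation converting the fast-in-$x$ ordering to the fast-in-$y$ ordering, so that $\mathcal{L}$ is the discrete Laplacian. *)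

From HB Require Import structures.
From mathcomp Require Import all_boot all_order all_algebra all_fingroup.
Set Implicit Arguments. Unset Strict Implicit. Unset Printing Implicit Defensive.
Import Order.TTheory GRing.Theory Num.Theory.
Local Open Scope ring_scope.

(* The n x n tridiagonal matrix D^(n)(a,b): diagonal (a,2,...,2,b),
   off-diagonals -1.  For n = 1 it is (a); for n = 2 it is [[a,-1],[-1,b]]. *)
Definition Dmat (R : ringType) (n : nat) (a b : R) : 'M[R]_n :=
  \matrix_(i < n, j < n)
    if i == j then (if (i : nat) == 0%N then a
                    else if (i : nat) == n.-1 then b else 2)
    else if ((i : nat) == j.+1) || ((j : nat) == i.+1) then -1 else 0.

Definition block_ok (R : realFieldType) (n : nat) (a b : R) : Prop :=
  [\/ (n = 1%N /\ 0 < a),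
      (n = 2%N /\ 0 < a /\ 1 < a * b)
    | [/\ (3 <= n)%N,
          (n - 2)%:R / (n - 1)%:R < a,
          (n - 2)%:R / (n - 1)%:R < b &
          ((n - 2)%:R * b - (n - 3)%:R) / ((n - 1)%:R * b - (n - 2)%:R) < a]].

Definition symmetric_mx (R : ringType) (n : nat) (A : 'M[R]_n) : Prop :=
  A^T = A.

Definition posdef_mx (R : realFieldType) (n : nat) (A : 'M[R]_n) : Prop :=
  forall v : 'cV[R]_n, v != 0 -> 0 < (v^T *m A *m v) 0 0.

From HB Require Import structures.
From mathcomp Require Import all_boot all_order all_algebra all_fingroup.
From mathcomp Require Import ring lra zify.
Set Implicit Arguments. Unset Strict Implicit. Unset Printing Implicit Defensive.
Import Order.TTheory GRing.Theory Num.Theory.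
Local Open Scope ring_scope.

(* Completing squares from the top writes its quadratic form as a sum of
   squares weighted by the Gaussian pivots a, 2 - 1/a, ..., whose i-th term is
   ((i + 1) a - i) / (i a - (i - 1)); the last pivot is corrected by b - 2, and
   conditions (1)-(3) say exactly that all pivots are positive. So D_xx and
   D_yy are positive definite, P^T D_yy P is positive semidefinite for every
   P, and the sum is positive definite. *)

Lemma sum_nat_pick (V : nmodType) n c (f : nat -> V) :
  \sum_(0 <= j < n) (if j == c then f j else 0) = if (c < n)%N then f c else 0.
Proof.
elim: n => [|n IH]; first by rewrite big_geq.
rewrite big_nat_recr //= IH.
have [lt|gt|->] := ltngtP c n.
- by rewrite addr0 ltnS ltnW.
- by rewrite addr0 ltnS leqNgt gt.
- by rewrite ltnSn add0r.
Qed.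

Lemma sum_nat_ltS (V : nmodType) n (f : nat -> V) :
  \sum_(0 <= i < n.+1) (if (i.+1 < n.+1)%N then f i else 0) = \sum_(0 <= i < n) f i.
Proof.
rewrite big_nat_recr //= ltnn addr0.
by apply: eq_big_nat => i /andP[_ ltin]; rewrite ltnS ltin.
Qed.

Lemma sum_ord_inord (V : nmodType) k (F : 'I_k.+1 -> V) :
  \sum_(i < k.+1) F i = \sum_(0 <= i < k.+1) F (inord i).
Proof. by rewrite big_mkord; apply: eq_bigr => i _; rewrite inord_val. Qed.

Lemma qform_sum_inord (R : pzSemiRingType) k (A : 'M[R]_k.+1) (v : 'cV[R]_k.+1) :
  (v^T *m A *m v) 0 0 = \sum_(0 <= i < k.+1) \sum_(0 <= j < k.+1)
     v (inord j) 0 * A (inord j) (inord i) * v (inord i) 0.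
Proof.
rewrite mxE sum_ord_inord; apply: eq_bigr => i _.
by rewrite mxE big_distrl /= sum_ord_inord; apply: eq_bigr => j _; rewrite mxE.
Qed.

Definition tridiag_mx (R : pzRingType) (n : nat) (d : nat -> R) : 'M[R]_n :=
  \matrix_(i < n, j < n)
    if i == j then d i
    else if ((i : nat) == j.+1) || ((j : nat) == i.+1) then -1 else 0.

Lemma tr_tridiag_mx (R : pzRingType) (n : nat) (d : nat -> R) :
  (tridiag_mx n d)^T = tridiag_mx n d.
Proof.
apply/matrixP => i j; rewrite !mxE.
by have [->|_] := eqVneq j i; rewrite ?eqxx // eq_sym orbC.
Qed.

Lemma tridiag_mx_qform (R : comPzRingType) k (d : nat -> R) (v : 'cV[R]_k.+1) :
  (v^T *m tridiag_mx k.+1 d *m v) 0 0 =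
  \sum_(0 <= i < k.+1) d i * v (inord i) 0 ^+ 2
  - 2 * \sum_(0 <= i < k) v (inord i) 0 * v (inord i.+1) 0.
Proof.
set w : nat -> R := fun i => v (inord i) 0.
have entry i j : (i < k.+1)%N -> (j < k.+1)%N ->
    w j * tridiag_mx k.+1 d (inord j) (inord i) * w i =
    (if j == i then d i * w i ^+ 2 else 0)
    - (if i == j.+1 then w j * w i else 0) - (if j == i.+1 then w i * w j else 0).
  move=> ltik ltjk; rewrite mxE -val_eqE /= !inordK //.
  have [->|neji] := eqVneq j i; first by rewrite (ltn_eqF (ltnSn i)); ring.
  have [->|_] := eqVneq i j.+1; first by rewrite orbT ltn_eqF //; ring.
  by case: (j == i.+1) => /=; ring.
rewrite qform_sum_inord.
have rows i : (0 <= i < k.+1)%N -> \sum_(0 <= j < k.+1)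
    w j * tridiag_mx k.+1 d (inord j) (inord i) * w i =
    d i * w i ^+ 2 - \sum_(0 <= j < k.+1) (if i == j.+1 then w j * w i else 0)
    - (if (i.+1 < k.+1)%N then w i * w i.+1 else 0).
  move=> /andP[_ ltik].
  under eq_big_nat => j /andP[_ ltjk] do rewrite entry //.
  by rewrite !sumrB sum_nat_pick (sum_nat_pick _ _ (fun j => w i * w j)) ltik.
rewrite (eq_big_nat _ _ rows) !sumrB exchange_big_nat /=.
under [X in _ - X - _]eq_bigr => j _ do rewrite (sum_nat_pick _ _ (fun i => w j * w i)).
by rewrite !sum_nat_ltS /w; ring.
Qed.

Definition Dmat_diag (R : nzRingType) (n : nat) (a b : R) (i : nat) : R :=
  if i == 0%N then a else if i == n.-1 then b else 2.

Lemma Dmat_tridiag (R : nzRingType) (n : nat) (a b : R) :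
  Dmat n a b = tridiag_mx n (Dmat_diag n a b).
Proof. by apply/matrixP => i j; rewrite !mxE. Qed.

Lemma tr_Dmat (R : nzRingType) (n : nat) (a b : R) : (Dmat n a b)^T = Dmat n a b.
Proof. by rewrite Dmat_tridiag tr_tridiag_mx. Qed.

Lemma symmetric_castmx (R : nzRingType) m n (e : m = n) (A : 'M[R]_m) :
  symmetric_mx A -> symmetric_mx (castmx (e, e) A).
Proof. by case: n / e; rewrite castmx_id. Qed.

Lemma symmetric_mxdiag (R : nzRingType) S (p_ : 'I_S -> nat)
    (B : forall i, 'M[R]_(p_ i)) :
  (forall i, symmetric_mx (B i)) -> symmetric_mx (\mxdiag_i B i).
Proof. by move=> B_sym; rewrite /symmetric_mx tr_mxdiag; apply: eq_mxdiag. Qed.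

Lemma symmetric_addr_conj (R : comNzRingType) n (A B P : 'M[R]_n) :
  symmetric_mx A -> symmetric_mx B -> symmetric_mx (A + P^T *m B *m P).
Proof.
by move=> A_sym B_sym; rewrite /symmetric_mx linearD /= !trmx_mul trmxK A_sym B_sym mulmxA.
Qed.

(* The quadratic form of [tridiag_mx k.+1] with diagonal (p, 2, ..., 2, 2 + q),
   or (p + q) when k = 0. *)
Definition tridiag_qform (R : pzRingType) (k : nat) (p q : R) (w : nat -> R) : R :=
  p * w 0%N ^+ 2 + 2 * \sum_(0 <= i < k) w i.+1 ^+ 2 + q * w k ^+ 2
  - 2 * \sum_(0 <= i < k) w i * w i.+1.

Lemma Dmat_qform (R : comNzRingType) k (a b : R) (v : 'cV[R]_k.+1) :
  (v^T *m Dmat k.+1 a b *m v) 0 0 =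
  tridiag_qform k a (if k is 0 then 0 else b - 2) (fun i => v (inord i) 0).
Proof.
rewrite Dmat_tridiag tridiag_mx_qform /tridiag_qform.
case: k v => [|k] v; first by rewrite big_nat1 !big_geq // /Dmat_diag /=; ring.
rewrite big_nat_recl // big_nat_recr //= [\sum_(0 <= i < k.+1) _ ^+ 2]big_nat_recr //=.
have -> : \sum_(0 <= i < k) Dmat_diag k.+2 a b i.+1 * v (inord i.+1) 0 ^+ 2 =
    2 * \sum_(0 <= i < k) v (inord i.+1) 0 ^+ 2.
  by rewrite mulr_sumr; apply: eq_big_nat => i /andP[_ ltik]; rewrite /Dmat_diag /= ltn_eqF.
rewrite /Dmat_diag /= eqxx; ring.
Qed.

Lemma tridiag_qformS (R : fieldType) k (p q : R) (w : nat -> R) : p != 0 ->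
  tridiag_qform k.+1 p q w =
  p * (w 0%N - w 1%N / p) ^+ 2 + tridiag_qform k (2 - p^-1) q (fun i => w i.+1).
Proof. by move=> p0; rewrite /tridiag_qform !big_nat_recl //=; field. Qed.

Section PositiveDefinite.
Variable R : realFieldType.

(* Positivity of the pivots p, 2 - 1/p, ... of the Gaussian elimination of
   [tridiag_qform k p q], the last one being shifted by q. *)
Fixpoint pivots_pos (k : nat) (p q : R) : Prop :=
  if k is k'.+1 then 0 < p /\ pivots_pos k' (2 - p^-1) q else 0 < p + q.

Lemma tridiag_qform_posdef k (p q : R) (w : nat -> R) : pivots_pos k p q ->
  0 <= tridiag_qform k p q w /\
  (tridiag_qform k p q w = 0 -> forall i, (i <= k)%N -> w i = 0).
Proof.
elim: k p q w => [|k IHk] p q w /=.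
  rewrite /tridiag_qform !big_geq // !mulr0 subr0 addr0 -mulrDl => pq_gt0.
  split; first by rewrite mulr_ge0 ?sqr_ge0 ?ltW.
  move=> /eqP; rewrite mulf_eq0 gt_eqF //= sqrf_eq0 => /eqP w0 i.
  by rewrite leqn0 => /eqP ->.
move=> [p_gt0 /(IHk _ _ (fun i => w i.+1))[tail_ge0 tail_eq0]].
rewrite tridiag_qformS ?gt_eqF //.
have head_ge0 : 0 <= p * (w 0%N - w 1%N / p) ^+ 2 by rewrite mulr_ge0 ?sqr_ge0 ?ltW.
split; first exact: addr_ge0.
move=> /eqP; rewrite paddr_eq0 // => /andP[/eqP head0 /eqP/tail_eq0 wS0].
case=> [|i] lei; last exact: wS0.
move: head0; rewrite wS0 // mul0r subr0 => /eqP.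
by rewrite mulf_eq0 gt_eqF //= sqrf_eq0 => /eqP.
Qed.

(* The i-th pivot of [tridiag_qform k.+1 p q] is ((i + 1) p - i) / (i p - (i - 1)). *)
Lemma pivots_pos_of_bounds k (p q : R) : 0 < (k%:R + 1) * p - k%:R ->
  k%:R * p - (k%:R - 1) < (q + 2) * ((k%:R + 1) * p - k%:R) -> pivots_pos k.+1 p q.
Proof.
elim: k p q => [|k IHk] p q.
  rewrite /= !mul0r !add0r !subr0 mul1r opprK => p_gt0 last_gt0; split => //.
  have p0 : p != 0 by rewrite gt_eqF.
  have -> : 2 - p^-1 + q = ((q + 2) * p - 1) / p by field.
  by rewrite divr_gt0 // subr_gt0.
rewrite -natr1; set x : R := k%:R => pivk_gt0 last_gt0.
have x_ge0 : 0 <= x by rewrite /x ler0n.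
have p_gt0 : 0 < p by nra.
have p0 : p != 0 by rewrite gt_eqF.
have e1 : (x + 1) * (2 - p^-1) - x = ((x + 1 + 1) * p - (x + 1)) / p by field.
have e2 : x * (2 - p^-1) - (x - 1) = ((x + 1) * p - x) / p by field.
split => //; apply: IHk; rewrite e1 ?divr_gt0 // e2 mulrA ltr_pM2r ?invr_gt0 //.
by move: last_gt0; congr (_ < _); ring.
Qed.

Lemma block_ok_pivots_pos n (a b : R) : block_ok n a b ->
  exists2 k, n = k.+1 & pivots_pos k a (if k is 0 then 0 else b - 2).
Proof.
case=> [[-> a_gt0]|[-> [a_gt0 ab_gt1]]|[n_ge3 lt_a lt_b lt_ab]].
- by exists 0%N; rewrite //= addr0.
- by exists 1%N => //; apply: (@pivots_pos_of_bounds 0%N); rewrite ?subrK; nra.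
move: lt_a lt_b lt_ab.
have [k {n_ge3}->] : exists k, n = k.+3 by exists (n - 3)%N; lia.
have [-> -> ->] : [/\ (k.+3 - 1 = k.+2)%N, (k.+3 - 2 = k.+1)%N & (k.+3 - 3 = k)%N].
  by split; lia.
rewrite -!natr1; set x : R := k%:R.
have x_ge0 : 0 <= x by rewrite /x ler0n.
have x2_gt0 : 0 < x + 1 + 1 by lra.
rewrite !(ltr_pdivrMr _ _ x2_gt0).
move=> lt_a lt_b; rewrite ltr_pdivrMr; last nra.
by move=> lt_ab; exists k.+2 => //; apply: pivots_pos_of_bounds; nra.
Qed.

Lemma Dmat_posdef n (a b : R) : block_ok n a b -> posdef_mx (Dmat n a b).
Proof.
case/block_ok_pivots_pos=> k -> pivots v v_neq0.
have [qform_ge0 qform_eq0] := tridiag_qform_posdef (fun i => v (inord i) 0) pivots.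
rewrite Dmat_qform lt_def qform_ge0 andbT; apply/eqP => /qform_eq0 v0.
apply/(negP v_neq0)/eqP/matrixP => i j.
by rewrite ord1 mxE -(v0 i) ?inord_val // -ltnS.
Qed.

Definition psd_mx n (A : 'M[R]_n) := forall v : 'cV[R]_n, 0 <= (v^T *m A *m v) 0 0.

Lemma posdef_psd n (A : 'M[R]_n) : posdef_mx A -> psd_mx A.
Proof.
move=> A_pd v; have [->|v_neq0] := eqVneq v 0; last exact/ltW/A_pd.
by rewrite trmx0 !mul0mx mxE.
Qed.

Lemma posdef_addr_psd n (A B : 'M[R]_n) :
  posdef_mx A -> psd_mx B -> posdef_mx (A + B).
Proof.
move=> A_pd B_psd v v_neq0; rewrite mulmxDr mulmxDl mxE.
exact: ltr_wpDr (B_psd v) (A_pd v v_neq0).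
Qed.

Lemma psd_mx_conj n (A P : 'M[R]_n) : psd_mx A -> psd_mx (P^T *m A *m P).
Proof.
move=> A_psd v.
have -> : v^T *m (P^T *m A *m P) *m v = (P *m v)^T *m A *m (P *m v).
  by rewrite trmx_mul !mulmxA.
exact: A_psd.
Qed.

Lemma posdef_castmx m n (e : m = n) (A : 'M[R]_m) :
  posdef_mx A -> posdef_mx (castmx (e, e) A).
Proof. by case: n / e; rewrite castmx_id. Qed.

Lemma posdef_mxdiag S (p_ : 'I_S -> nat) (B : forall i, 'M[R]_(p_ i)) :
  (forall i, posdef_mx (B i)) -> posdef_mx (\mxdiag_i B i).
Proof.
move=> B_pd v v_neq0.
have [i vi_neq0] : exists i, submxcol v i != 0.
  apply/existsP; apply: contraNT v_neq0 => /existsPn vi0.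
  by rewrite -[v]submxcolK (eq_mxcol (fun i => eqP (negbNE (vi0 i)))) mxcol0.
rewrite -[v]submxcolK tr_mxcol mul_mxrow_mxdiag mul_mxrow_mxcol summxE (bigD1 i) //=.
apply: ltr_wpDr (B_pd i _ vi_neq0).
by apply: sumr_ge0 => j _; apply: posdef_psd.
Qed.

End PositiveDefinite.

Theorem theorem2 (R : realFieldType) (Nc S T : nat)
  (n : 'I_S -> nat) (a b : 'I_S -> R)
  (m : 'I_T -> nat) (c d : 'I_T -> R)
  (hNc : (1 <= Nc)%N)
  (hn : (\sum_(k < S) n k)%N = Nc) (hm : (\sum_(l < T) m l)%N = Nc)
  (Dxx Dyy P : 'M[R]_Nc)
  (hDxx : Dxx = castmx (hn, hn) (\mxdiag_(k < S) Dmat (n k) (a k) (b k)))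
  (hDyy : Dyy = castmx (hm, hm) (\mxdiag_(l < T) Dmat (m l) (c l) (d l)))
  (hP : is_perm_mx P)
  (hx : forall k, block_ok (n k) (a k) (b k))
  (hy : forall l, block_ok (m l) (c l) (d l)) :
  symmetric_mx (Dxx + P^T *m Dyy *m P) /\ posdef_mx (Dxx + P^T *m Dyy *m P).
Proof.
have Dxx_pd : posdef_mx Dxx.
  by rewrite hDxx; apply/posdef_castmx/posdef_mxdiag => k; apply: Dmat_posdef.
have Dyy_pd : posdef_mx Dyy.
  by rewrite hDyy; apply/posdef_castmx/posdef_mxdiag => l; apply: Dmat_posdef.
have Dxx_sym : symmetric_mx Dxx.
  by rewrite hDxx; apply/symmetric_castmx/symmetric_mxdiag => k; apply: tr_Dmat.
have Dyy_sym : symmetric_mx Dyy.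
  by rewrite hDyy; apply/symmetric_castmx/symmetric_mxdiag => l; apply: tr_Dmat.
split; first exact: symmetric_addr_conj.
exact/posdef_addr_psd/psd_mx_conj/posdef_psd.
Qed.
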